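(* Let $G$ be an edge-colored graph of order $n\geq 6$ such that $|CN(u)\cup CN(v)|\geq n-1$ for every pair of vertices $u$ and $v$ in $V(G)$. Then $G$ contains a rainbow $C_3$ unless $G$ is a rainbow $K_{\lceil n/2\rceil,\lfloor n/2\rfloor}$ (i.e. $G$ is a complete bipartite graph with parts of sizes $\lceil n/2\rceil,\lfloor n/2\rfloor$ all of whose edges have distinct colors).
   Context: An edge-colored graph is a finite simple graph $G$ with a map $C:E(G)\to\mathbb{N}$. For $v\in V(G)$, the color neighborhood $CN(v)$ is the set of colors assigned to edges incident to $v$. A subgraph is rainbow if all its edges have distinct colors; $C_3$ is a triangle. *)

From mathcomp Require Import all_boot.
Set Implicit Arguments. Unset Strict Implicit. Unset Printing Implicit Defensive.

Definition simple_graph (T : finType) (e : rel T) : Prop :=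
  (forall x y, e x y = e y x) /\ (forall x, ~~ e x x).

(* An edge coloring is given by a symmetric c : T -> T -> nat;
   only its values on edges matter. *)
Definition sym_coloring (T : finType) (c : T -> T -> nat) : Prop :=
  forall x y, c x y = c y x.

(* Color neighborhood CN(v), as a sequence (possibly with repetitions). *)
Definition CN (T : finType) (e : rel T) (c : T -> T -> nat) (v : T) : seq nat :=
  [seq c v u | u <- enum T & e v u].

Definition CN_union_card (T : finType) (e : rel T) (c : T -> T -> nat) (u v : T) : nat :=
  size (undup (CN e c u ++ CN e c v)).

Definition has_rainbow_C3 (T : finType) (e : rel T) (c : T -> T -> nat) : Prop :=
  exists x y z : T, [/\ e x y, e y z & e z x] /\
    [/\ c x y != c y z, c y z != c z x & c z x != c x y].

Definition rainbow_graph (T : finType) (e : rel T) (c : T -> T -> nat) : Prop :=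
  forall x y x' y', e x y -> e x' y' -> c x y = c x' y' ->
    (x = x' /\ y = y') \/ (x = y' /\ y = x').

(* G is the complete bipartite graph K_{ceil(n/2), floor(n/2)}, n = #|T|. *)
Definition is_balanced_complete_bipartite (T : finType) (e : rel T) : Prop :=
  exists A : {set T}, #|A| = #|T| - #|T| %/ 2 /\
    forall x y, e x y = ((x \in A) != (y \in A)).

From mathcomp Require Import all_boot zify.
From Stdlib Require Import Classical.
Set Implicit Arguments. Unset Strict Implicit. Unset Printing Implicit Defensive.

(* Assume G has no rainbow triangle and let uv be an edge of color a. Every
   color of CN(u) ∪ CN(v) other than a is witnessed by some w outside {u, v}:
   it is the color of uw if uw is an edge not colored a, and otherwise the color
   of vw, because the non-rainbow triangle uvw forces c(vw) = c(uw) when both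
   differ from a. Hence |CN(u) ∪ CN(v)| <= 1 + (n - 2), and the hypothesis
   forces every w outside {u, v} to be a witness, distinct witnesses giving
   distinct colors. Consequently a vertex seeing some color twice is
   monochromatic, which quickly produces a rainbow triangle; so the coloring is
   proper, G is triangle-free, and every vertex is adjacent to an end of every
   edge, i.e. G is complete bipartite. The degree condition then balances the
   two parts, and the injectivity of witnesses makes G rainbow. *)

Lemma CNP (T : finType) (e : rel T) (c : T -> T -> nat) u a :
  reflect (exists2 t, e u t & a = c u t) (a \in CN e c u).
Proof.
apply: (iffP mapP) => [[t] | [t eut ->]].
  by rewrite mem_filter mem_enum andbT => eut ->; exists t.
by exists t; rewrite // mem_filter mem_enum eut.
Qed.

Lemma size_CN (T : finType) (e : rel T) (c : T -> T -> nat) u (S : {set T}) :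
  (forall t, e u t = (t \in S)) -> size (CN e c u) = #|S|.
Proof.
move=> eS; rewrite size_map size_filter cardE /enum_mem size_filter count_filter.
by apply: eq_count => t; rewrite /= eS andbT.
Qed.

Lemma size_undup_subset (U : eqType) (s1 s2 : seq U) :
  {subset s1 <= s2} -> size (undup s1) <= size (undup s2).
Proof.
by move=> s12; apply: uniq_leq_size (undup_uniq s1) _ => x; rewrite !mem_undup => /s12.
Qed.

Lemma dominating_triangle_free_bipartite (T : finType) (e : rel T) v :
  (forall x y, e x y = e y x) ->
  (forall x y z, e x y -> e y z -> e z x -> False) ->
  (forall p q t, e p q -> t != p -> t != q -> e p t || e q t) ->
  forall x y, e x y = (e v x != e v y).
Proof.
move=> e_sym triangle_free dominating.
have cross x y : e v x -> ~~ e v y -> e x y.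
  move=> evx nvy; have [->|yv] := eqVneq y v; first by rewrite e_sym.
  have yx : y != x by apply: contraNneq nvy => ->.
  by have /orP[] := dominating v x y evx yv yx; rewrite ?(negbTE nvy).
move=> x y; have [evx|nvx] := boolP (e v x); have [evy|nvy] := boolP (e v y) => /=.
- by apply/negP => exy; apply: (triangle_free v x y) => //; rewrite e_sym.
- exact: cross.
- by rewrite e_sym; apply: cross.
apply/negP => exy.
have vx : v != x by apply: contraNneq nvy => ->.
have vy : v != y by apply: contraNneq nvx => ->; rewrite e_sym.
by have /orP[] := dominating x y v exy vx vy; rewrite e_sym ?(negbTE nvx) ?(negbTE nvy).
Qed.

Section ColorDegreeCondition.

Variables (T : finType) (e : rel T) (c : T -> T -> nat).
Hypothesis e_sym : forall x y, e x y = e y x.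
Hypothesis e_irr : forall x, ~~ e x x.
Hypothesis c_sym : sym_coloring c.
Hypothesis color_degree : forall u v : T, u != v -> #|T| - 1 <= CN_union_card e c u v.

Lemma edge_neq x y : e x y -> x != y.
Proof. by apply: contraTneq => ->. Qed.

Lemma monochromatic_pair_card u x a b : u != x ->
  (forall t, e u t -> c u t = a) -> (forall t, e x t -> c x t = b) -> #|T| <= 3.
Proof.
move=> ux mono_u mono_x; have := color_degree ux; rewrite /CN_union_card.
have : size (undup (CN e c u ++ CN e c x)) <= size [:: a; b].
  apply: uniq_leq_size (undup_uniq _) _ => col.
  rewrite mem_undup mem_cat => /orP[] /CNP[t et ->].
    by rewrite (mono_u t et) mem_head.
  by rewrite (mono_x t et) !inE eqxx orbT.
by rewrite /=; lia.
Qed.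

Lemma exists_edge : 1 < #|T| -> exists u v, e u v.
Proof.
move=> n_gt1; have /card_gt1P[u [v [_ _ uv]]] := n_gt1.
have : 0 < size (CN e c u ++ CN e c v).
  apply: leq_trans (size_undup _); apply: leq_trans (color_degree uv); lia.
case E: (CN e c u ++ CN e c v) => [|a s] // _.
have : a \in CN e c u ++ CN e c v by rewrite E mem_head.
by rewrite mem_cat => /orP[] /CNP[t et _]; [exists u, t | exists v, t].
Qed.

Hypothesis no_rainbow : ~ has_rainbow_C3 e c.

Lemma non_rainbow_triangle x y z : e x y -> e y z -> e z x ->
  c x y != c y z -> c z x != c x y -> c y z = c z x.
Proof.
move=> exy eyz ezx cxy_yz czx_xy; have [//|cyz_zx] := eqVneq (c y z) (c z x).
by case: no_rainbow; exists x, y, z.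
Qed.

Definition is_witness u v w :=
  (e u w && (c u w != c u v)) || (e v w && (c v w != c u v)).

Definition witnesses u v := [set w | is_witness u v w].

Definition witness_color u v w := if e u w && (c u w != c u v) then c u w else c v w.

Lemma CN_union_sub_witness_colors u v : e u v ->
  {subset CN e c u ++ CN e c v <= c u v :: image (witness_color u v) (witnesses u v)}.
Proof.
move=> euv a; rewrite mem_cat in_cons => /orP[] /CNP[t et ->].
- have [->//|cut /=] := eqVneq (c u t) (c u v).
  apply/imageP; exists t; first by rewrite inE /is_witness et cut.
  by rewrite /witness_color et cut.
- have [->//|cvt /=] := eqVneq (c v t) (c u v).
  apply/imageP; exists t; first by rewrite inE /is_witness et cvt orbT.
  rewrite /witness_color; case: ifP => // /andP[eut cut].
  rewrite (c_sym u t); apply: non_rainbow_triangle => //.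
  - by rewrite e_sym.
  - by rewrite eq_sym.
  - by rewrite c_sym.
Qed.

Lemma edge_saturated u v : e u v ->
  witnesses u v = ~: [set u; v] /\ uniq (image (witness_color u v) (witnesses u v)).
Proof.
move=> euv; have uv := edge_neq euv.
set P := witnesses u v; set D := ~: [set u; v]; set s := image (witness_color u v) P.
have PD : P \subset D.
  apply/subsetP => w; rewrite !inE /is_witness; apply: contraTN => /orP[]/eqP->.
    by rewrite (negbTE (e_irr u)) (c_sym v u) eqxx andbF.
  by rewrite (negbTE (e_irr v)) eqxx andbF.
have cardD : #|D| + 2 = #|T| by rewrite -(cardsC [set u; v]) cards2 uv addnC.
have deg_le : #|T| - 1 <= (size (undup s)).+1.
  apply: leq_trans (color_degree uv) _.
  apply: leq_trans (size_undup_subset (CN_union_sub_witness_colors euv)) _.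
  by rewrite /=; case: ifP.
have undup_le : size (undup s) <= #|P|.
  by rewrite -(size_image (witness_color u v)); apply: size_undup.
have P_le := subset_leq_card PD.
have PeqD : P = D by apply/eqP; rewrite eqEcard PD /=; lia.
split=> //; apply/negPn; rewrite -ltn_size_undup -leqNgt size_image; lia.
Qed.

Lemma witness_of_edge u v w : e u v -> w != u -> w != v -> is_witness u v w.
Proof.
move=> euv wu wv; have [PD _] := edge_saturated euv.
have : w \in ~: [set u; v] by rewrite !inE negb_or wu wv.
by rewrite -PD inE.
Qed.

Lemma witness_color_inj u v : e u v -> {in ~: [set u; v] &, injective (witness_color u v)}.
Proof. by case/edge_saturated => <- uniq_colors; apply/dinjectiveP. Qed.

Lemma edge_dominating p q t : e p q -> t != p -> t != q -> e p t || e q t.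
Proof.
by move=> epq tp tq; case/orP: (witness_of_edge epq tp tq) => /andP[-> _]; rewrite ?orbT.
Qed.

Lemma repeated_color_monochromatic u y z t :
  e u y -> e u z -> y != z -> c u y = c u z -> e u t -> c u t = c u y.
Proof.
move=> euy euz yz cyz eut; have [//|cty] := eqVneq (c u t) (c u y).
have yu : y != u by rewrite eq_sym edge_neq.
have zu : z != u by rewrite eq_sym edge_neq.
have yt : y != t by apply: contra_neq cty => <-.
have zt : z != t by apply: contra_neq cty => <-; rewrite cyz.
case/eqP: yz; apply: (witness_color_inj eut); rewrite ?inE ?negb_or ?yu ?yt ?zu ?zt //.
by rewrite /witness_color euy euz -cyz eq_sym cty.
Qed.

Lemma monochromatic_neighbor u v t a : (forall s, e u s -> c u s = a) ->
  e u v -> t != u -> t != v -> e v t && (c v t != a).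
Proof.
move=> mono_u euv tu tv; move: (witness_of_edge euv tu tv).
rewrite /is_witness (mono_u v euv); case eut: (e u t) => //=.
by rewrite (mono_u t eut) eqxx.
Qed.

Lemma proper_coloring u y z : 3 < #|T| -> e u y -> e u z -> c u y = c u z -> y = z.
Proof.
move=> n_gt3 euy euz cyz; have [//|yz] := eqVneq y z; exfalso.
set a := c u y.
have mono_u t : e u t -> c u t = a := repeated_color_monochromatic euy euz yz cyz.
have distinct_at p q r : e u p -> e p q -> e p r -> q != r -> c p q != a -> c p q != c p r.
  move=> eup epq epr qr cpq_a; apply: contra_neq cpq_a => cqr.
  have epu : e p u by rewrite e_sym.
  by rewrite -(repeated_color_monochromatic epq epr qr cqr epu) c_sym mono_u.
have [x] : exists x, x \in ~: [set u; y; z].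
  apply/card_gt0P; have := cardsC [set u; y; z].
  have : #|[set u; y; z]| <= 3.
    by rewrite -setUA cardsU1 cards2; case: (_ \notin _); case: (y != z).
  lia.
rewrite !inE !negb_or => /andP[/andP[xu xy] xz].
have zu : z != u by rewrite eq_sym edge_neq.
have zy : z != y by rewrite eq_sym.
have /andP[eyz cyz_a] := monochromatic_neighbor mono_u euy zu zy.
have /andP[eyx cyx_a] := monochromatic_neighbor mono_u euy xu xy.
have /andP[ezx czx_a] := monochromatic_neighbor mono_u euz xu xz.
apply: no_rainbow; exists y, z, x; split; first by split; rewrite // e_sym.
split.
- rewrite (c_sym y z); apply: distinct_at;
    by rewrite ?(e_sym z y) ?(eq_sym y x) ?(c_sym z y).
- apply/eqP; rewrite (c_sym z x) => cxz_xy.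
  have exz : e x z by rewrite e_sym.
  have exy : e x y by rewrite e_sym.
  have mono_x t : e x t -> c x t = c x z := repeated_color_monochromatic exz exy zy cxz_xy.
  by move: n_gt3; rewrite ltnNge (monochromatic_pair_card (_ : u != x) mono_u mono_x) // eq_sym.
- by rewrite (c_sym x y); apply: distinct_at.
Qed.

Lemma triangle_free x y z : 3 < #|T| -> e x y -> e y z -> e z x -> False.
Proof.
move=> n_gt3 exy eyz ezx; apply: no_rainbow; exists x, y, z; split=> //.
have distinct_at p q r : e q p -> e p r -> e r q -> c p q != c p r.
  move=> eqp epr erq; apply: contra_neq (edge_neq erq) => cpq_pr.
  by apply/esym/(proper_coloring n_gt3 _ epr cpq_pr); rewrite e_sym.
split.
- by rewrite (c_sym x y); apply: distinct_at exy eyz ezx.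
- by rewrite (c_sym y z); apply: distinct_at eyz ezx exy.
- by rewrite (c_sym z x); apply: distinct_at ezx exy eyz.
Qed.

Lemma same_color_path_ends x y x' y' : 3 < #|T| ->
  e x y -> e x x' -> e x' y' -> c x y = c x' y' -> y = x' /\ y' = x.
Proof.
move=> n_gt3 exy exx' ex'y' cc.
have [yx'|yx'] := eqVneq y x'.
  split=> //; apply/esym/(proper_coloring n_gt3 _ ex'y'); first by rewrite e_sym.
  by rewrite c_sym -cc yx'.
have [y'x|y'x] := eqVneq y' x.
  split=> //; apply: (proper_coloring n_gt3 exy exx').
  by rewrite cc y'x c_sym.
exfalso; suff yy' : y = y'.
  have eyx : e y x by rewrite e_sym.
  have eyx' : e y x' by rewrite yy' e_sym.
  have cyx : c y x = c y x' by rewrite c_sym cc -yy' c_sym.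
  by move: (edge_neq exx'); rewrite (proper_coloring n_gt3 eyx eyx' cyx) eqxx.
apply: (witness_color_inj exx').
- by rewrite !inE negb_or yx' eq_sym edge_neq.
- by rewrite !inE negb_or y'x eq_sym edge_neq.
have cxy_xx' : c x y != c x x'.
  by apply: contra_neq yx'; apply: proper_coloring.
have nexy' : e x y' = false.
  by apply/negP => exy'; apply: (triangle_free n_gt3 exx' ex'y'); rewrite e_sym.
by rewrite /witness_color exy cxy_xx' nexy'.
Qed.

Lemma rainbow_coloring : 3 < #|T| -> rainbow_graph e c.
Proof.
move=> n_gt3 x y x' y' exy ex'y' cc.
have : e x x' || e x y'.
  have [<-|xx'] := eqVneq x' x; first by rewrite ex'y' orbT.
  have [<-|xy'] := eqVneq y' x; first by rewrite e_sym ex'y'.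
  by rewrite (e_sym x) (e_sym x) edge_dominating // eq_sym.
case/orP => [exx' | exy'].
  by have [-> ->] := same_color_path_ends n_gt3 exy exx' ex'y' cc; right.
have ey'x' : e y' x' by rewrite e_sym.
by have [-> ->] := same_color_path_ends n_gt3 exy exy' ey'x' (etrans cc (c_sym _ _)); left.
Qed.

Lemma part_card_bound (A : {set T}) : (forall x y, e x y = ((x \in A) != (y \in A))) ->
  1 < #|A| -> #|T| - 1 <= 2 * #|~: A|.
Proof.
move=> bip /card_gt1P[x [x' [xA x'A xx']]].
have deg t : t \in A -> size (CN e c t) = #|~: A|.
  by move=> tA; apply: size_CN => s; rewrite bip tA inE.
apply: leq_trans (color_degree xx') _; apply: leq_trans (size_undup _) _.
by rewrite size_cat !deg // addnn -mul2n.
Qed.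

Lemma balanced_complete_bipartite (A : {set T}) x y : 3 < #|T| -> x \in A -> y \notin A ->
  (forall x y, e x y = ((x \in A) != (y \in A))) -> is_balanced_complete_bipartite e.
Proof.
move=> n_gt3 xA yA bip.
have bipC x' y' : e x' y' = ((x' \in ~: A) != (y' \in ~: A)).
  by rewrite !inE bip; case: (_ \in A); case: (_ \in A).
have boundC := part_card_bound bip; have := part_card_bound bipC; rewrite setCK => boundA.
have A_gt0 : 0 < #|A| by apply/card_gt0P; exists x.
have C_gt0 : 0 < #|~: A| by apply/card_gt0P; exists y; rewrite inE.
have cardA := cardsC A.
have [A_bal | A_unbal] := eqVneq #|A| (#|T| - #|T| %/ 2); first by exists A.
by exists (~: A); split => //; lia.
Qed.

Lemma balanced_rainbow_bipartite :
  3 < #|T| -> is_balanced_complete_bipartite e /\ rainbow_graph e c.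
Proof.
move=> n_gt3; split; last exact: rainbow_coloring.
have [u [v euv]] := exists_edge (ltnW (ltnW n_gt3)).
apply: (@balanced_complete_bipartite [set x | e v x] u v) => //.
- by rewrite inE e_sym.
- by rewrite inE e_irr.
move=> x y; rewrite !inE; apply: dominating_triangle_free_bipartite => //.
- by move=> p q r; apply: triangle_free.
- exact: edge_dominating.
Qed.

End ColorDegreeCondition.

Theorem theorem7 (T : finType) (e : rel T) (c : T -> T -> nat) :
  simple_graph e -> sym_coloring c ->
  6 <= #|T| ->
  (forall u v : T, u != v -> #|T| - 1 <= CN_union_card e c u v) ->
  has_rainbow_C3 e c \/ (is_balanced_complete_bipartite e /\ rainbow_graph e c).
Proof.
move=> [e_sym e_irr] c_sym n_ge6 color_degree.
have [rainbow_C3 | no_rainbow] := classic (has_rainbow_C3 e c); [by left | right].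
exact: balanced_rainbow_bipartite e_sym e_irr c_sym color_degree no_rainbow (leq_trans _ n_ge6).
Qed.
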